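(* Let $p>2$ be a prime, $q=p^h$, and let $\mathcal{F}$ be the projective closure of $ax^ny^m+x^n+y^m=1$ over $\mathbb{F}_q$, where $a\in\mathbb{F}_q$, $a\neq0$, $a\neq-1$. Then for all positive integers $m,n$ with $p\nmid mn$, $\mathcal{F}$ is classical with respect to lines.
   Context: With $\varphi=(1,x,y)$, $\tau$ a separating element of the function field and $D^{(k)}_\tau$ Hasse derivatives, the order sequence w.r.t. lines is the lexicographically smallest $\varepsilon_0<\varepsilon_1<\varepsilon_2$ with $\det(D^{(\varepsilon_i)}_\tau\varphi_j)\neq0$; the curve is classical w.r.t. lines if this sequence is $(0,1,2)$. *)

From HB Require Import structures.
From mathcomp Require Import all_boot all_order all_algebra all_field.
Set Implicit Arguments. Unset Strict Implicit. Unset Printing Implicit Defensive.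
Import Order.TTheory GRing.Theory.
Local Open Scope ring_scope.

(* The function field of the curve is modelled abstractly as a field K
   together with the embedding iota : F_q -> K of the constant field. *)
Section FunctionField.
Variables (F : fieldType) (K : fieldType) (iota : {rmorphism F -> K}).

Definition in_Ft (t z : K) : Prop :=
  exists P Q : {poly F}, (map_poly iota Q).[t] != 0 /\
    z = (map_poly iota P).[t] / (map_poly iota Q).[t].

Definition transcendental (t : K) : Prop :=
  forall P : {poly F}, P != 0 -> (map_poly iota P).[t] != 0.

Definition separating (t : K) : Prop :=
  transcendental t /\
  forall z : K, exists g : {poly K},
    [/\ g != 0, (forall i, in_Ft t g`_i), root g z & separable_poly g].

(* evaluation of a bivariate polynomial (inner variable x, outer y) *)
Definition ev2 (x y : K) (P : {poly {poly F}}) : K :=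
  (map_poly (fun c : {poly F} => (map_poly iota c).[x]) P).[y].

Definition generated_by (x y : K) : Prop :=
  forall z : K, exists P Q : {poly {poly F}},
    ev2 x y Q != 0 /\ z = ev2 x y P / ev2 x y Q.

Definition hasse_derivation (t : K) (D : nat -> K -> K) : Prop :=
  [/\ forall u, D 0%N u = u,
      forall k u v, D k (u + v) = D k u + D k v,
      forall k u v, D k (u * v) = \sum_(i < k.+1) D i u * D (k - i)%N v,
      forall k c, (0 < k)%N -> D k (iota c) = 0 &
      D 1%N t = 1 /\ forall k, (1 < k)%N -> D k t = 0].

Definition phi (x y : K) (j : 'I_3) : K := nth 0 [:: 1; x; y] j.

Definition wronsk (D : nat -> K -> K) (x y : K) (e0 e1 e2 : nat) : K :=
  \det (\matrix_(i < 3, j < 3) D (nth 0%N [:: e0; e1; e2] i) (phi x y j)).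

Definition lex_lt (a0 a1 a2 b0 b1 b2 : nat) : bool :=
  (a0 < b0)%N || ((a0 == b0) && ((a1 < b1)%N || ((a1 == b1) && (a2 < b2)%N))).

Definition order_sequence (D : nat -> K -> K) (x y : K) (e0 e1 e2 : nat) : Prop :=
  [/\ (e0 < e1 < e2)%N, wronsk D x y e0 e1 e2 != 0 &
      forall f0 f1 f2, (f0 < f1 < f2)%N -> wronsk D x y f0 f1 f2 != 0 ->
        ~~ lex_lt f0 f1 f2 e0 e1 e2].

Definition classical_wrt_lines (x y : K) : Prop :=
  forall (t : K) (D : nat -> K -> K), separating t -> hasse_derivation t D ->
    order_sequence D x y 0 1 2.

End FunctionField.

(* Write d = D^(1). In odd characteristic D^(2) = d^2/2, so the Wronskian of
   (1, x, y) for the orders (0, 1, 2) is (dx d^2y - dy d^2x)/2.  With u = x^n,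
   differentiating the curve equation gives
   m x (1 - u)(1 + a u) dy + n (1 + a) u y dx = 0, and differentiating once
   more shows that a vanishing Wronskian forces x (dx)^2 dy Q(u) = 0 for the
   quadratic Q = flex_poly a m n, whose constant and leading coefficients
   m (n - 1) and m a (n + 1) cannot both vanish when p <> 2.  Since x, hence u,
   is transcendental, Q(u) <> 0; and dx <> 0, since otherwise d would vanish on
   F(x, y), which contains the separating element t with dt = 1. *)

From HB Require Import structures.
From mathcomp Require Import all_boot all_order all_algebra all_field.
From mathcomp Require Import ring zify.
Import GRing.Theory.
Set Implicit Arguments. Unset Strict Implicit.
Local Open Scope ring_scope.

Lemma eq0_lincomb4 (R : pzRingType) (c1 c2 c3 c4 l1 r1 l2 r2 l3 r3 l4 r4 z : R) :
  l1 = r1 -> l2 = r2 -> l3 = r3 -> l4 = r4 ->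
  z = c1 * (l1 - r1) + c2 * (l2 - r2) + c3 * (l3 - r3) + c4 * (l4 - r4) -> z = 0.
Proof. by move=> -> -> -> -> ->; rewrite !subrr !mulr0 !addr0. Qed.

Arguments eq0_lincomb4 {R} c1 c2 c3 c4 {l1 r1 l2 r2 l3 r3 l4 r4 z}.

Definition flex_poly (R : nzRingType) (A : R) (m n : nat) : {poly R} :=
  (m%:R * (n%:R - 1))%:P + (m%:R * (1 - A) - n%:R * (1 + A)) *: 'X
  + (m%:R * A * (n%:R + 1)) *: 'X^2.

Lemma map_flex_poly (R S : nzRingType) (f : {rmorphism R -> S}) A m n :
  map_poly f (flex_poly A m n) = flex_poly (f A) m n.
Proof.
by rewrite /flex_poly !rmorphD /= map_polyC !map_polyZ map_polyX map_polyXn /=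
  !(rmorphM, rmorphB, rmorphD, rmorph_nat, rmorph1).
Qed.

Lemma flex_poly_neq0 (R : idomainType) (A : R) m n :
  (2 : R) != 0 -> m%:R != 0 :> R -> A != 0 -> flex_poly A m n != 0.
Proof.
move=> two_neq0 m_neq0 A_neq0; apply: contra two_neq0 => /eqP flex0.
have := congr1 (coefp 0) flex0; have := congr1 (coefp 2) flex0.
rewrite /= !coefD !coefZ !coefC !coefX !coefXn /= !(mulr0, mulr1, addr0, add0r, coef0).
move=> /eqP; rewrite !mulf_eq0 (negbTE m_neq0) (negbTE A_neq0) /= => /eqP n1_eq0.
move=> /eqP; rewrite mulf_eq0 (negbTE m_neq0) /= subr_eq0 => /eqP n_eq1.
by rewrite -n1_eq0 n_eq1.
Qed.

Section Derivation.
Variables (R : comNzRingType) (d : R -> R).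
Hypotheses (derD : forall u v, d (u + v) = d u + d v)
           (derM : forall u v, d (u * v) = u * d v + d u * v).

Lemma der0 : d 0 = 0.
Proof. by apply: (addrI (d 0)); rewrite -derD !addr0. Qed.

Lemma der1 : d 1 = 0.
Proof. by apply: (addrI (d 1)); rewrite addr0 -{3}[1]mul1r derM mulr1 mul1r. Qed.

Lemma derN u : d (- u) = - d u.
Proof. by apply: (addrI (d u)); rewrite -derD !subrr der0. Qed.

Lemma der_nat k : d k%:R = 0.
Proof.
elim: k => [|k IHk]; first exact: der0.
by rewrite mulrS derD der1 IHk addr0.
Qed.

Lemma derXn u k : u * d (u ^+ k) = k%:R * u ^+ k * d u.
Proof.
elim: k => [|k IHk]; first by rewrite expr0 der1 mulr0 !mul0r.
by rewrite exprS derM mulrDr IHk; ring.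
Qed.

Lemma der_horner (g : {poly R}) z :
  (forall i, d g`_i = 0) -> d g.[z] = g^`().[z] * d z.
Proof.
elim/poly_ind: g => [|g c IHg] dg0; first by rewrite horner0 deriv0 horner0 mul0r der0.
have dc : d c = 0 by have := dg0 0%N; rewrite coefD coefMX coefC add0r.
rewrite hornerMXaddC derivMXaddC !hornerE derD !derM dc IHg; first by ring.
by move=> i; have := dg0 i.+1; rewrite coefD coefMX coefC addr0.
Qed.

Section CurveRelations.
Variables (A : R) (m n : nat) (x y u v : R).
Hypotheses (dA : d A = 0) (du : x * d u = n%:R * u * d x) (dv : y * d v = m%:R * v * d y)
           (curve : A * u * v + u + v = 1).

Lemma curve_der :
  m%:R * x * ((1 - u) * (1 + A * u)) * d y + n%:R * (1 + A) * u * y * d x = 0.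
Proof.
have := congr1 d curve; rewrite der1 !(derD, derM) dA => dcurve.
apply: (eq0_lincomb4 (x * y * (1 + A * u))
  (- (A * y * n%:R * u * d x + (1 + A * u) * x * m%:R * d y))
  (- ((1 + A * u) * (1 + A * v) * y)) (- ((1 + A * u) ^+ 2 * x)) dcurve curve du dv).
by ring.
Qed.

Lemma curve_wronsk_flex : d x * d (d y) - d y * d (d x) = 0 ->
  x * d x ^+ 2 * d y * (flex_poly A m n).[u] = 0.
Proof.
(* Multiply [dS0] by x dx; then [S0] eliminates y dx and [du] eliminates x du. *)
move=> W0; have S0 := curve_der.
have := congr1 d S0; rewrite der0 !(derD, derM, derN) der1 dA !der_nat // => dS0.
apply: (eq0_lincomb4 (- (d x * x)) (n%:R * d x ^+ 2 + x * d (d x))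
  (m%:R * x ^+ 2 * ((1 - u) * (1 + A * u)))
  (d x * (m%:R * x * (A - 1 - 2 * A * u) * d y + n%:R * (1 + A) * d x * y)) dS0 S0 W0 du).
by rewrite /flex_poly !(hornerD, hornerC, hornerZ, hornerX, hornerXn); ring.
Qed.

End CurveRelations.

End Derivation.

Section FieldDerivation.
Variables (K : fieldType) (d : K -> K).
Hypotheses (derD : forall u v, d (u + v) = d u + d v)
           (derM : forall u v, d (u * v) = u * d v + d u * v).

Lemma der_div_eq0 u v : d u = 0 -> d v = 0 -> d (u / v) = 0.
Proof.
move=> du dv; have [-> | v0] := eqVneq v 0; first by rewrite invr0 mulr0 (der0 derD).
have := derM (u / v) v; rewrite divfK // du dv mulr0 add0r => /esym/eqP.
by rewrite mulf_eq0 (negbTE v0) orbF => /eqP.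
Qed.

End FieldDerivation.

Section FunctionField.
Variables (F K : fieldType) (iota : {rmorphism F -> K}).

Lemma transcendental_expn x n :
  (0 < n)%N -> transcendental iota x -> transcendental iota (x ^+ n).
Proof.
move=> n_gt0 trx q q_neq0.
rewrite -[x ^+ n](hornerXn x) -(map_polyXn iota) -horner_comp -map_comp_poly.
by apply: trx; rewrite comp_poly_eq0 // size_polyXn ltnS.
Qed.

Lemma transcendental_horner_neq0 x (q : {poly F}) :
  transcendental iota x -> q.[0] != 0 -> (map_poly iota q).[x] != 0.
Proof. by move=> trx q0; apply: trx; apply: contraNneq q0 => ->; rewrite horner0. Qed.

Variable d : K -> K.
Hypotheses (derD : forall u v, d (u + v) = d u + d v)
           (derM : forall u v, d (u * v) = u * d v + d u * v)
           (der_iota : forall c, d (iota c) = 0).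

Lemma der_map_horner (q : {poly F}) z :
  d (map_poly iota q).[z] = (map_poly iota q)^`().[z] * d z.
Proof. by apply: der_horner => // i; rewrite coef_map der_iota. Qed.

Lemma der_separating_eq0 t : separating iota t -> d t = 0 -> forall z, d z = 0.
Proof.
move=> [_ sep_t] dt z; have [g [g_neq0 g_Ft gz sep_g]] := sep_t z.
have dFt w : in_Ft iota t w -> d w = 0.
  by move=> [P [Q [_ ->]]]; apply: der_div_eq0; rewrite // der_map_horner // dt mulr0.
have := der_horner derD derM z (fun i => dFt _ (g_Ft i)).
rewrite (eqP gz) (der0 derD) => /esym/eqP; rewrite mulf_eq0 => /orP[|/eqP //].
by move: sep_g; rewrite unlock => /coprimep_root/(_ gz)/negbTE ->.
Qed.

Lemma der_generated_eq0 x y :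
  generated_by iota x y -> d x = 0 -> d y = 0 -> forall z, d z = 0.
Proof.
move=> gen dx dy z; have dev P : d (ev2 iota x y P) = 0.
  rewrite /ev2 der_horner // ?dy ?mulr0 // => i.
  by rewrite coef_map_id0 /= ?map_poly0 ?horner0 // der_map_horner // dx mulr0.
by have [P [Q [_ ->]]] := gen z; apply: der_div_eq0.
Qed.

End FunctionField.

Section Hasse.
Variables (F K : fieldType) (iota : {rmorphism F -> K}) (t : K) (D : nat -> K -> K).
Hypothesis hasseD : hasse_derivation iota t D.

Lemma hasse1D u v : D 1%N (u + v) = D 1%N u + D 1%N v.
Proof. by case: hasseD. Qed.

Lemma hasse1M u v : D 1%N (u * v) = u * D 1%N v + D 1%N u * v.
Proof.
case: hasseD => D0 _ DM _ _.
by rewrite DM !big_ord_recl big_ord0 /= !D0 addr0 addrC.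
Qed.

Lemma hasse1_iota c : D 1%N (iota c) = 0.
Proof. by case: hasseD => _ _ _ Diota _; apply: Diota. Qed.

(* D^(2) - d^2/2 is a derivation vanishing on the constants and on t. *)
Lemma hasse2E : (2 : K) != 0 -> separating iota t ->
  forall u, D 2%N u = D 1%N (D 1%N u) / 2.
Proof.
move=> two_neq0 sep_t; case: hasseD => D0 DD DM Diota [Dt1 Dt2].
pose E u := D 2%N u - D 1%N (D 1%N u) / 2.
have ED u v : E (u + v) = E u + E v by rewrite /E !(DD, hasse1D); field.
have EM u v : E (u * v) = u * E v + E u * v.
  by rewrite /E DM !big_ord_recl big_ord0 /= !D0 !hasse1M hasse1D !hasse1M; field.
move=> u; apply/eqP; rewrite -subr_eq0; apply/eqP.
apply: (der_separating_eq0 ED EM _ sep_t) => [c|]; rewrite /E.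
  by rewrite !Diota // (der0 hasse1D) mul0r subrr.
by rewrite Dt2 // Dt1 (der1 hasse1M) mul0r subrr.
Qed.

Lemma hasse_wronsk012 x y :
  wronsk D x y 0 1 2 = D 1%N x * D 2%N y - D 1%N y * D 2%N x.
Proof.
case: hasseD => D0 _ _ Diota _.
have D1 k : (0 < k)%N -> D k 1 = 0 by move=> k_gt0; rewrite -(rmorph1 iota) Diota.
rewrite /wronsk (expand_det_col _ 0) !big_ord_recl big_ord0 !mxE /= D0 !D1 //.
rewrite !mul0r !addr0 /cofactor /= expr0 mul1r (expand_det_col _ 0) !big_ord_recl big_ord0.
by rewrite /cofactor !det_mx11 !mxE /phi /= /bump /=; ring.
Qed.

End Hasse.

Lemma order_sequence012 (K : fieldType) (D : nat -> K -> K) x y :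
  wronsk D x y 0 1 2 != 0 -> order_sequence D x y 0 1 2.
Proof.
by move=> W_neq0; split=> // f0 f1 f2 f_incr _; rewrite /lex_lt; lia.
Qed.

Section Curve.
Variables (F K : fieldType) (iota : {rmorphism F -> K}) (a : F) (m n : nat) (x y : K).
Hypotheses (m_gt0 : (0 < m)%N) (n_gt0 : (0 < n)%N)
  (curve : iota a * x ^+ n * y ^+ m + x ^+ n + y ^+ m = 1) (trx : transcendental iota x).

Lemma curve_x_neq0 : x != 0.
Proof. by have := trx (negbT (polyX_eq0 _)); rewrite map_polyX hornerX. Qed.

Lemma curve_1Bu_neq0 : 1 - x ^+ n != 0.
Proof.
have := transcendental_horner_neq0 (q := 1 - 'X) (transcendental_expn n_gt0 trx).
by rewrite rmorphB /= map_polyX rmorph1 !hornerE subr0 => ->; rewrite ?oner_neq0.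
Qed.

Lemma curve_1Du_neq0 : 1 + iota a * x ^+ n != 0.
Proof.
have := transcendental_horner_neq0 (q := 1 + a *: 'X) (transcendental_expn n_gt0 trx).
by rewrite rmorphD /= map_polyZ map_polyX rmorph1 !hornerE => ->; rewrite ?oner_neq0.
Qed.

Lemma curve_y_neq0 : y != 0.
Proof.
apply: contra_neq curve_1Bu_neq0 => y0.
by move: curve; rewrite y0 expr0n (gtn_eqF m_gt0) mulr0 add0r addr0 => ->; rewrite subrr.
Qed.

Variables (d : K -> K) (t : K).
Hypotheses (derD : forall u v, d (u + v) = d u + d v)
           (derM : forall u v, d (u * v) = u * d v + d u * v)
           (der_iota : forall c, d (iota c) = 0).
Hypotheses (gen : generated_by iota x y) (dt : d t = 1).
Hypotheses (two_neq0 : (2 : F) != 0) (m_neq0 : m%:R != 0 :> F) (n_neq0 : n%:R != 0 :> F)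
           (a_neq0 : a != 0) (a_neqN1 : a != -1).

Let natK k : k%:R != 0 :> F -> k%:R != 0 :> K.
Proof. by rewrite -(rmorph_nat iota) fmorph_eq0. Qed.

Let curve_der_xy : m%:R * x * ((1 - x ^+ n) * (1 + iota a * x ^+ n)) * d y
  + n%:R * (1 + iota a) * x ^+ n * y * d x = 0.
Proof. exact (curve_der derD derM (der_iota a) (derXn derM x n) (derXn derM y m) curve). Qed.

Lemma curve_dx_neq0 : d x != 0.
Proof.
apply/eqP => dx0; have dy0 : d y = 0.
  move: curve_der_xy; rewrite dx0 mulr0 addr0 => /eqP.
  rewrite !mulf_eq0 (negbTE (natK m_neq0)) (negbTE curve_x_neq0).
  by rewrite (negbTE curve_1Bu_neq0) (negbTE curve_1Du_neq0) => /eqP.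
by have := oner_neq0 K; rewrite -dt (der_generated_eq0 derD derM der_iota gen dx0 dy0) eqxx.
Qed.

Lemma curve_dy_neq0 : d y != 0.
Proof.
have A1_neq0 : 1 + iota a != 0.
  by rewrite -(rmorph1 iota) -rmorphD fmorph_eq0 addrC addr_eq0.
apply/eqP => dy0; move: curve_der_xy; rewrite dy0 mulr0 add0r => /eqP.
rewrite !mulf_eq0 (negbTE (natK n_neq0)) (negbTE A1_neq0) expf_eq0 (negbTE curve_x_neq0).
by rewrite andbF (negbTE curve_y_neq0) (negbTE curve_dx_neq0).
Qed.

Lemma curve_wronsk_neq0 : d x * d (d y) - d y * d (d x) != 0.
Proof.
apply/eqP => W0.
have := curve_wronsk_flex derD derM (der_iota a) (derXn derM x n) (derXn derM y m) curve W0.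
apply/eqP; rewrite !mulf_neq0 ?expf_neq0 ?curve_x_neq0 ?curve_dx_neq0 ?curve_dy_neq0 //.
rewrite -map_flex_poly; apply: (transcendental_expn n_gt0 trx); exact: flex_poly_neq0.
Qed.

End Curve.

Unset Implicit Arguments.
Theorem proposition4p1 (p h : nat) (F : finFieldType) (K : fieldType)
    (iota : {rmorphism F -> K}) (a : F) (x y : K) (m n : nat) :
  prime p -> (2 < p)%N -> (0 < h)%N -> #|F| = (p ^ h)%N ->
  a != 0 -> a != -1 ->
  (0 < m)%N -> (0 < n)%N -> ~~ (p %| m * n)%N ->
  iota a * x ^+ n * y ^+ m + x ^+ n + y ^+ m = 1 ->
  transcendental iota x -> generated_by iota x y ->
  classical_wrt_lines iota x y.
Proof.
move=> p_prime p_gt2 _ cardF a_neq0 a_neqN1 m_gt0 n_gt0 p_ndvd_mn curve trx gen t D sep_t hasseD.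
have natF k : ~~ (p %| k)%N -> k%:R != 0 :> F.
  by rewrite (dvdn_pcharf (card_finPcharP cardF p_prime)).
have two_neq0 : (2 : F) != 0 by apply: natF; rewrite gtnNdvd.
have m_neq0 : m%:R != 0 :> F.
  by apply: natF; apply: contra p_ndvd_mn => /dvdn_mulr->.
have n_neq0 : n%:R != 0 :> F.
  by apply: natF; apply: contra p_ndvd_mn => /dvdn_mull->.
have two_neq0K : (2 : K) != 0 by rewrite -(rmorph_nat iota) fmorph_eq0.
apply: order_sequence012; rewrite (hasse_wronsk012 hasseD) !(hasse2E hasseD) //.
rewrite !mulrA -mulrBl mulf_neq0 ?invr_neq0 //.
have [_ _ _ _ [Dt1 _]] := hasseD.
exact (curve_wronsk_neq0 m_gt0 n_gt0 curve trx (hasse1D hasseD) (hasse1M hasseD)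
  (hasse1_iota hasseD) gen Dt1 two_neq0 m_neq0 n_neq0 a_neq0 a_neqN1).
Qed.
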